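(* If $\mathcal{H}$ is a complex Hilbert space with $\dim \mathcal{H} = 3$, then every partial isometry $T \in B(\mathcal{H})$ is a complex symmetric operator.
   Context: A partial isometry is an operator $T$ such that $T^*T$ is an orthogonal projection. A conjugation on $\mathcal{H}$ is a conjugate-linear map $C:\mathcal{H}\to\mathcal{H}$ that is isometric and involutive ($C^2=I$). An operator $T$ is complex symmetric if $T = CT^*C$ for some conjugation $C$. *)

From HB Require Import structures.
From mathcomp Require Import all_boot all_order all_algebra.
From mathcomp Require Import reals.
From mathcomp.real_closed Require Import complex.
Set Implicit Arguments. Unset Strict Implicit. Unset Printing Implicit Defensive.
Import Order.TTheory GRing.Theory Num.Theory.
Local Open Scope ring_scope.

Section Defs.
Variable R : realType.
Variable n : nat.
Local Notation C := (R[i]).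

Definition adj (A : 'M[C]_n) : 'M[C]_n := \matrix_(i, j) (A j i)^*.

Definition dotc (u v : 'cV[C]_n) : C := \sum_(i < n) u i 0 * (v i 0)^*.

Definition is_conjugation (J : 'cV[C]_n -> 'cV[C]_n) : Prop :=
  [/\ (forall (a : C) (x y : 'cV[C]_n), J (a *: x + y) = a^* *: J x + J y),
      (forall x, dotc (J x) (J x) = dotc x x)
    & (forall x, J (J x) = x)].

Definition is_orth_proj (P : 'M[C]_n) : Prop := P *m P = P /\ adj P = P.

Definition partial_isometry (T : 'M[C]_n) : Prop := is_orth_proj (adj T *m T).

Definition complex_symmetric (T : 'M[C]_n) : Prop :=
  exists J : 'cV[C]_n -> 'cV[C]_n,
    is_conjugation J /\ forall x, T *m x = J (adj T *m J x).
End Defs.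

From HB Require Import structures.
From mathcomp Require Import all_boot all_order all_algebra perm.
From mathcomp Require Import spectral sesquilinear ring.
From mathcomp Require Import reals.
From mathcomp.real_closed Require Import complex.
Set Implicit Arguments. Unset Strict Implicit. Unset Printing Implicit Defensive.
Import Order.TTheory GRing.Theory Num.Theory Num.Def.
Local Open Scope ring_scope.
Local Open Scope sesquilinear_scope.

(* If T is a partial isometry, P = T^*T and Q = TT^* are orthogonal projections
   of equal trace, hence unitarily similar, and this yields T = V P with V
   unitary.  Diagonalize V = U^* D U and set K = U P U^*.  When a diagonal
   unitary S makes S^* K S symmetric, W = U^* S^2 D conj(U) is a symmetric
   unitary with T W symmetric, and x |-> W conj(x) is a conjugation J with
   T = J T^* J.  In dimension 3 such an S exists: the phases of K01 and K02 can
   be removed, and the phase of K12 along with them because the cycle product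
   K01 K12 conj(K02) = |K01|^2 (1 - K00 - K11) is real by idempotence. *)

Lemma perm_eq_bool (s t : seq bool) :
  size s = size t -> count id s = count id t -> perm_eq s t.
Proof.
move=> eq_size eq_cnt; apply/allP => -[] _ /=.
  by rewrite !(eq_count eqb_id) eq_cnt.
have countF u : count_mem false u = (size u - count id u)%N.
  by rewrite -(count_predC id) addKn; apply: eq_count => -[].
by rewrite !countF eq_size eq_cnt.
Qed.

Lemma perm_of_count_eq n (b c : 'I_n -> bool) :
  (\sum_j b j = \sum_j c j)%N -> exists p : 'S_n, forall j, b j = c (p j).
Proof.
have sumE (a : 'I_n -> bool) : (\sum_j a j)%N = count id [tuple a j | j < n].
  by rewrite /= count_map -sumn_count sumnE big_map big_enum.
rewrite !sumE => eq_count.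
have /tuple_permP[p bE] : perm_eq [tuple b j | j < n] [tuple c j | j < n].
  by apply: perm_eq_bool; rewrite ?size_tuple.
move/val_inj in bE; exists p => j.
by rewrite -[b j](tnth_mktuple b) bE !tnth_mktuple.
Qed.

Lemma perm_mx_conj_diag (R : pzSemiRingType) n (p : 'S_n) (d : 'rV[R]_n) :
  perm_mx p *m diag_mx d *m (perm_mx p)^T = diag_mx (col_perm p d).
Proof.
rewrite tr_perm_mx -col_permE -row_permE.
by apply/matrixP => i j; rewrite !mxE (inj_eq perm_inj).
Qed.

Section Projections.
Variables (C : numClosedFieldType) (n : nat).
Implicit Types (P Q T U V : 'M[C]_n).

Lemma trmxC_mul m p q (A : 'M[C]_(m, p)) (B : 'M[C]_(p, q)) :
  (A *m B)^t* = B^t* *m A^t*.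
Proof. by rewrite trmx_mul map_mxM. Qed.

Lemma trmxCD m p (A B : 'M[C]_(m, p)) : (A + B)^t* = A^t* + B^t*.
Proof. by apply/matrixP => i j; rewrite !mxE rmorphD. Qed.

Lemma trmxC_mul_eq0 m p (A : 'M[C]_(m, p)) : A^t* *m A = 0 -> A = 0.
Proof.
move=> AA0; apply/matrixP => i j; rewrite mxE.
have sq_ge0 k : true -> 0 <= A k j * (A k j)^* by rewrite mul_conjC_ge0.
have: \sum_k A k j * (A k j)^* = 0.
  transitivity ((A^t* *m A) j j); last by rewrite AA0 mxE.
  by rewrite mxE; apply: eq_bigr => k _; rewrite !mxE mulrC.
by move/(psumr_eq0P sq_ge0)/(_ i isT)/eqP; rewrite mul_conjC_eq0 => /eqP.
Qed.

Lemma mulmxtC_eq0 m p (A : 'M[C]_(m, p)) : A *m A^t* = 0 -> A = 0.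
Proof.
rewrite -{1}[A]trmxCK => /trmxC_mul_eq0 A0.
by rewrite -[A]trmxCK A0 trmx0 map_mx0.
Qed.

Lemma perm_mx_unitary (p : 'S_n) : (perm_mx p : 'M[C]_n) \is unitarymx.
Proof.
by apply/unitarymxP; rewrite tr_perm_mx map_perm_mx -perm_mxM mulgV perm_mx1.
Qed.

Lemma mxtrace_unitary_conj U A :
  U \is unitarymx -> \tr (U^t* *m A *m U) = \tr A.
Proof. by move=> Uu; rewrite mxtrace_mulC mulmxA (unitarymxP Uu) mul1mx. Qed.

Lemma orthoproj_diag P : P *m P = P -> P^t* = P ->
  exists2 U, U \is unitarymx &
    exists b : 'I_n -> bool, P = U^t* *m diag_mx (\row_j (b j)%:R) *m U.
Proof.
move=> PP Ph; have normP : P \is normalmx by apply/normalmxP; rewrite Ph.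
have Uu := spectral_unitarymx P.
move: (orthomx_spectralP normP); rewrite invmx_unitary //.
set U := spectralmx P; set d := spectral_diag P => PE.
exists U => //; exists (fun j => d 0 j == 1).
have UPU : U *m P *m U^t* = diag_mx d.
  by rewrite PE !mulmxA (unitarymxP Uu) mul1mx mulmxtVK.
have dd : diag_mx d *m diag_mx d = diag_mx d.
  by rewrite -UPU !mulmxA mulmxKtV // -(mulmxA U P P) PP.
rewrite {1}PE; congr (_ *m diag_mx _ *m _); apply/rowP => j; rewrite mxE.
have /matrixP/(_ j j) := dd; rewrite mulmx_diag !mxE eqxx mulr1n => djj.
have /eqP : d 0 j * (d 0 j - 1) = 0 by rewrite mulrBr mulr1 djj subrr.
rewrite mulf_eq0 subr_eq0 => /orP[/eqP->|/eqP->]; last by rewrite eqxx.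
by rewrite eq_sym oner_eq0.
Qed.

Lemma orthoproj_unitarily_similar P Q :
  P *m P = P -> P^t* = P -> Q *m Q = Q -> Q^t* = Q -> \tr P = \tr Q ->
  exists2 V, V \is unitarymx & Q = V *m P *m V^t*.
Proof.
move=> PP Ph QQ Qh trPQ.
have [U Uu [b PE]] := orthoproj_diag PP Ph.
have [X Xu [c QE]] := orthoproj_diag QQ Qh.
have trE (a : 'I_n -> bool) :
    \tr (diag_mx (\row_j (a j)%:R) : 'M[C]_n) = (\sum_j a j)%:R.
  by rewrite mxtrace_diag natr_sum; apply: eq_bigr => j _; rewrite mxE.
have [p bE] : exists p : 'S_n, forall j, b j = c (p j).
  apply: perm_of_count_eq; apply/eqP; rewrite -(eqr_nat C) -!trE.
  by move: trPQ; rewrite PE QE !mxtrace_unitary_conj // => ->.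
set Pi : 'M[C]_n := perm_mx p.
have PiTPi : Pi^T *m Pi = 1%:M by rewrite tr_perm_mx -perm_mxM mulVg perm_mx1.
have UPU : U *m P *m U^t* = Pi *m diag_mx (\row_j (c j)%:R) *m Pi^T.
  rewrite PE !mulmxA (unitarymxP Uu) mul1mx mulmxtVK // perm_mx_conj_diag.
  by congr diag_mx; apply/rowP => j; rewrite !mxE bE.
have cE : diag_mx (\row_j (c j)%:R) = Pi^T *m (U *m P *m U^t*) *m Pi.
  by rewrite UPU !mulmxA PiTPi mul1mx -mulmxA PiTPi mulmx1.
exists (X^t* *m Pi^T *m U).
  by rewrite !mul_unitarymx ?trmxC_unitary ?trmx_unitary ?perm_mx_unitary.
by rewrite QE cE !trmxC_mul trmxCK trmxK map_perm_mx !mulmxA.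
Qed.

Section Complement.
Variable P : 'M[C]_n.
Hypotheses (PP : P *m P = P) (Ph : P^t* = P).

Lemma trmxC_compl : (1%:M - P)^t* = 1%:M - P.
Proof. by rewrite linearB /= trmx1 map_mxB map_mx1 Ph. Qed.

Lemma proj_mul_compl : P *m (1%:M - P) = 0.
Proof. by rewrite mulmxBr mulmx1 PP subrr. Qed.

Lemma compl_mul_proj : (1%:M - P) *m P = 0.
Proof. by rewrite mulmxBl mul1mx PP subrr. Qed.

Lemma compl_idem : (1%:M - P) *m (1%:M - P) = 1%:M - P.
Proof. by rewrite mulmxBl mul1mx proj_mul_compl subr0. Qed.

Lemma mulmx_compl_eq0 m (Z : 'M[C]_(m, n)) :
  Z^t* *m Z = P -> Z *m (1%:M - P) = 0.
Proof.
move=> ZZ; apply: trmxC_mul_eq0.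
rewrite trmxC_mul trmxC_compl mulmxA -(mulmxA (1%:M - P)) ZZ.
by rewrite compl_mul_proj mul0mx.
Qed.

Lemma compl_mulmx_eq0 m (Z : 'M[C]_(n, m)) :
  Z *m Z^t* = P -> (1%:M - P) *m Z = 0.
Proof.
move=> ZZ; apply: mulmxtC_eq0.
rewrite trmxC_mul trmxC_compl mulmxA -(mulmxA (1%:M - P) Z) ZZ.
by rewrite compl_mul_proj mul0mx.
Qed.

End Complement.

Lemma unitary_extension T : T^t* *m T *m (T^t* *m T) = T^t* *m T ->
  exists2 V, V \is unitarymx & T = V *m (T^t* *m T).
Proof.
set P := T^t* *m T => PP.
have Ph : P^t* = P by rewrite trmxC_mul trmxCK.
have TP : T *m P = T.
  by rewrite -{2}[T]mulmx1 -(subrK P 1%:M) mulmxDr mulmx_compl_eq0 // add0r.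
set Q := T *m T^t*.
have QQ : Q *m Q = Q by rewrite mulmxA -(mulmxA T) TP.
have Qh : Q^t* = Q by rewrite trmxC_mul trmxCK.
have [V Vu QE] := orthoproj_unitarily_similar PP Ph QQ Qh (mxtrace_mulC _ _).
(* Z has initial and final projection P, so adding 1 - P makes it unitary. *)
set Z := V^t* *m T.
have ZZ : Z^t* *m Z = P by rewrite trmxC_mul trmxCK mulmxA mulmxtVK.
have ZZ' : Z *m Z^t* = P.
  rewrite trmxC_mul trmxCK mulmxA -(mulmxA _ T) -/Q QE !mulmxA.
  by rewrite (mulmx1C (unitarymxP Vu)) mul1mx mulmxKtV.
set W := Z + (1%:M - P).
have WW : W^t* *m W = 1%:M.
  have ZtPc : Z^t* *m (1%:M - P) = 0.
    by rewrite -trmxC_compl // -trmxC_mul compl_mulmx_eq0 // trmx0 map_mx0.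
  rewrite trmxCD trmxC_compl // mulmxDl (mulmxDr (Z^t*)) (mulmxDr (1%:M - P)).
  rewrite ZZ ZtPc.
  by rewrite compl_mulmx_eq0 // compl_idem // addr0 add0r addrC subrK.
exists (V *m W); first by rewrite mul_unitarymx //; apply/unitarymxP/mulmx1C.
rewrite -mulmxA mulmxDl compl_mul_proj // addr0 -mulmxA TP.
by rewrite mulmxA (unitarymxP Vu) mul1mx.
Qed.

End Projections.

Lemma trmx_congr_sym (R : comPzSemiRingType) m n
    (A : 'M[R]_(m, n)) (M : 'M[R]_n) :
  M^T = M -> (A *m M *m A^T)^T = A *m M *m A^T.
Proof. by move=> MT; rewrite !trmx_mul trmxK MT mulmxA. Qed.

Section PhaseSymmetrizable.
Variables (C : numClosedFieldType) (n : nat).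

Definition phase_symmetrizable (K : 'M[C]_n) :=
  exists2 s : 'rV[C]_n, diag_mx s \is unitarymx &
    ((diag_mx s)^t* *m K *m diag_mx s)^T = (diag_mx s)^t* *m K *m diag_mx s.

Lemma diag_unitary (s : 'rV[C]_n) :
  (forall j, s 0 j * (s 0 j)^* = 1) -> diag_mx s \is unitarymx.
Proof.
move=> s1; apply/unitarymxP; rewrite tr_diag_mx map_diag_mx mulmx_diag.
by rewrite -diag_const_mx; congr diag_mx; apply/rowP => j; rewrite !mxE s1.
Qed.

Lemma hermitian_trmx_real (M : 'M[C]_n) : M^t* = M ->
  (forall i j : 'I_n, (i < j)%N -> M i j \is Num.real) -> M^T = M.
Proof.
move=> Mh Mr; have Mc i j : M j i = (M i j)^* by rewrite -[in LHS]Mh !mxE.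
apply/matrixP => i j; rewrite mxE; case: (ltngtP i j) => [ij|ji|/val_inj->//].
  by rewrite Mc (CrealP (Mr _ _ ij)).
by rewrite [RHS]Mc (CrealP (Mr _ _ ji)).
Qed.

Lemma symmetrizing_unitary (T : 'M[C]_n) :
  (forall K : 'M[C]_n, K *m K = K -> K^t* = K -> phase_symmetrizable K) ->
  T^t* *m T *m (T^t* *m T) = T^t* *m T ->
  exists W : 'M[C]_n, [/\ W \is unitarymx, W^T = W & (T *m W)^T = T *m W].
Proof.
move=> proj_sym PP; have [V Vu TE] := unitary_extension PP.
have Ph : (T^t* *m T)^t* = T^t* *m T by rewrite trmxC_mul trmxCK.
move: (T^t* *m T) PP Ph TE => P PP Ph TE.
have normV : V \is normalmx.
  by apply/normalmxP; rewrite (unitarymxP Vu) (mulmx1C (unitarymxP Vu)).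
have Uu := spectral_unitarymx V.
move: (orthomx_spectralP normV); rewrite invmx_unitary //.
set U := spectralmx V; set D := diag_mx (spectral_diag V) => VE.
have Du : D \is unitarymx.
  have -> : D = U *m V *m U^t*.
    by rewrite VE !mulmxA (unitarymxP Uu) mul1mx mulmxtVK.
  by rewrite !mul_unitarymx ?trmxC_unitary.
set K := U *m P *m U^t*.
have [s Su SKS_sym] : phase_symmetrizable K.
  apply: proj_sym; last first.
    by rewrite /K trmxC_mul (trmxC_mul U P) trmxCK Ph mulmxA.
  by rewrite /K !mulmxA mulmxKtV // -(mulmxA U P P) PP.
set S := diag_mx s.
exists (U^t* *m (S *m S *m D) *m (U^t*)^T); split.
- by rewrite !mul_unitarymx // ?trmx_unitary trmxC_unitary.
- by apply: (trmx_congr_sym (U^t*)); rewrite !mulmx_diag tr_diag_mx.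
have -> : T *m (U^t* *m (S *m S *m D) *m (U^t*)^T) =
    U^t* *m (D *m S *m (S^t* *m K *m S) *m (D *m S)^T) *m (U^t*)^T.
  have DST : (D *m S)^T = S *m D by rewrite trmx_mul !tr_diag_mx.
  by rewrite TE VE DST !mulmxA mulmxtVK.
by apply: (trmx_congr_sym (U^t*)); apply: trmx_congr_sym.
Qed.

End PhaseSymmetrizable.

Section Dimension3.
Variable C : numClosedFieldType.

Definition phase (z : C) : C := if z == 0 then 1 else z / `|z|.

Lemma phase_unit z : phase z * (phase z)^* = 1.
Proof.
rewrite /phase; case: eqP => [_|/eqP z0]; first by rewrite conjC1 mulr1.
rewrite rmorphM fmorphV /= conj_normC mulrACA -normCK -invfM -expr2.
by rewrite divff // expf_neq0 // normr_eq0.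
Qed.

Lemma mul_conj_phase z : z * (phase z)^* = `|z|.
Proof.
rewrite /phase; case: eqP => [->|/eqP z0]; first by rewrite mul0r normr0.
by rewrite rmorphM fmorphV /= conj_normC mulrA -normCK expr2 mulfK // normr_eq0.
Qed.

Lemma phase_triangle (a b c : C) : a * b * c^* \is Num.real ->
  exists u v : C, [/\ u * u^* = 1, v * v^* = 1,
    a * u \is Num.real, u^* * b * v \is Num.real & c * v \is Num.real].
Proof.
move=> abc_real; have phaseC z : (phase z)^* * (phase z)^*^* = 1.
  by rewrite conjCK mulrC phase_unit.
have [->|a0] := eqVneq a 0.
  exists (phase (b * (phase c)^*)), (phase c)^*; split.
  - exact: phase_unit.
  - exact: phaseC.
  - by rewrite mul0r real0.
  - by rewrite -mulrA mulrC mul_conj_phase normr_real.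
  - by rewrite mul_conj_phase normr_real.
have [->|c0] := eqVneq c 0.
  exists (phase a)^*, (phase (phase a * b))^*; split.
  - exact: phaseC.
  - exact: phaseC.
  - by rewrite mul_conj_phase normr_real.
  - by rewrite conjCK mul_conj_phase normr_real.
  - by rewrite mul0r real0.
exists (phase a)^*, (phase c)^*; split; try exact: phaseC;
  try by rewrite mul_conj_phase normr_real.
rewrite conjCK /phase (negPf a0) (negPf c0) rmorphM fmorphV /= conj_normC.
have -> : a / `|a| * b * (c^* / `|c|) = a * b * c^* / (`|a| * `|c|).
  by rewrite invfM; ring.
by rewrite rpredM // rpredV rpredM ?normr_real.
Qed.

Lemma ord3_cases (P : 'I_3 -> Prop) : P 0 -> P 1 -> P 2 -> forall i, P i.
Proof.
by move=> P0 P1 P2 [[|[|[|//]]] lti]; [move: P0 | move: P1 | move: P2];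
  congr P; apply: val_inj.
Qed.

Lemma sum_ord3 (F : 'I_3 -> C) : \sum_k F k = F 0 + F 1 + F 2.
Proof.
rewrite !big_ord_recl big_ord0 addr0 addrA.
by congr (_ + _ + _); congr F; apply: val_inj.
Qed.

Lemma proj3_cycle_real (K : 'M[C]_3) : K *m K = K -> K^t* = K ->
  K 0 1 * K 1 2 * (K 0 2)^* \is Num.real.
Proof.
move=> KK Kh; have Kc i j : K j i = (K i j)^* by rewrite -[in LHS]Kh !mxE.
have Kd i : K i i \is Num.real by apply/CrealP; rewrite -Kc.
have K10E : K 1 0 = K 1 0 * K 0 0 + K 1 1 * K 1 0 + K 1 2 * K 2 0.
  by rewrite -{1}KK mxE sum_ord3.
have -> : K 0 1 * K 1 2 * (K 0 2)^* = K 0 1 * K 1 0 * (1 - K 0 0 - K 1 1).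
  rewrite -Kc -!mulrA; congr (_ * _).
  transitivity (K 1 0 - K 1 0 * K 0 0 - K 1 1 * K 1 0); last by ring.
  by rewrite {1}K10E; ring.
by rewrite rpredM ?rpredB ?rpred1 ?Kd // (Kc 0 1) ger0_real // mul_conjC_ge0.
Qed.

Lemma proj3_phase_symmetrizable (K : 'M[C]_3) : K *m K = K -> K^t* = K ->
  phase_symmetrizable K.
Proof.
move=> KK Kh.
have [u [v [uu vv r01 r12 r02]]] := phase_triangle (proj3_cycle_real KK Kh).
exists (\row_j [:: 1; u; v]`_j).
  by apply: diag_unitary; elim/ord3_cases; rewrite mxE //= conjC1 mulr1.
apply: hermitian_trmx_real; first by rewrite !trmxC_mul trmxCK Kh mulmxA.
move=> i j; rewrite tr_diag_mx map_diag_mx mul_mx_diag mul_diag_mx !mxE.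
by elim/ord3_cases: i; elim/ord3_cases: j => //= _; rewrite ?conjC1 ?mul1r.
Qed.

End Dimension3.

Section ComplexSymmetric.
Variables (R : realType) (n : nat).
Local Notation C := R[i].

Lemma adjE (A : 'M[C]_n) : adj A = A^t*.
Proof. by apply/matrixP => i j; rewrite !mxE. Qed.

Lemma map_conjCK m p (A : 'M[C]_(m, p)) : map_mx conjC (map_mx conjC A) = A.
Proof. by apply/matrixP => i j; rewrite !mxE conjCK. Qed.

Lemma dotcE (u v : 'cV[C]_n) : dotc u v = (v^t* *m u) 0 0.
Proof. by rewrite /dotc mxE; apply: eq_bigr => i _; rewrite !mxE mulrC. Qed.

Lemma complex_symmetric_of_symmetric_unitary (T W : 'M[C]_n) :
  W \is unitarymx -> W^T = W -> (T *m W)^T = T *m W -> complex_symmetric T.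
Proof.
move=> Wu WT TWT; have Wc : W^t* = map_mx conjC W by rewrite WT.
exists (fun x => W *m map_mx conjC x); split; first split.
- by move=> a x y; rewrite map_mxD map_mxZ mulmxDr scalemxAr.
- move=> x; rewrite !dotcE trmxC_mul mulmxA mulmxKtV // !mxE.
  by apply: eq_bigr => i _; rewrite !mxE conjCK mulrC.
- by move=> x; rewrite map_mxM map_conjCK mulmxA -Wc (unitarymxP Wu) mul1mx.
have WTT : W *m T^T = T *m W by rewrite -TWT trmx_mul WT.
by move=> x; rewrite adjE !map_mxM /= !map_conjCK !mulmxA -Wc WTT mulmxtVK.
Qed.

End ComplexSymmetric.

Theorem corollary5p2 (R : realType) (T : 'M[R[i]]_3) :
  partial_isometry T -> complex_symmetric T.
Proof.
move=> [PP _]; rewrite !adjE in PP.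
have [W [Wu WT TWT]] := symmetrizing_unitary (@proj3_phase_symmetrizable _) PP.
exact: complex_symmetric_of_symmetric_unitary Wu WT TWT.
Qed.
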